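(* Let $\mathcal{A}=(Q,\Sigma,q_0,\Delta,F,C)$ be a PA of dimension $d$. Then there exists a PA $\mathcal{A}^{IO}$ of dimension $d+1$ such that: the initial state of $\mathcal{A}^{IO}$ is its only accepting state; $L(\mathcal{A})\setminus\{\varepsilon\}=L(\mathcal{A}^{IO})\setminus\{\varepsilon\}$; and the underlying graph of $\mathcal{A}^{IO}$ is strongly connected (its set of states forms a single strongly connected component).
   Context: A semi-linear set in $\mathbb{N}^d$ is a finite union of sets $\{b_0+\sum_{j=1}^\ell b_jz_j\mid z_j\in\mathbb{N}\}$ with $b_j\in\mathbb{N}^d$. A Parikh automaton (PA) of dimension $d$ is $(Q,\Sigma,q_0,\Delta,F,C)$ with finite $Q$, $q_0\in Q$, $F\subseteq Q$, finite $\Delta\subseteq Q\times\Sigma\times\mathbb{N}^d\times Q$, semi-linear $C\subseteq\mathbb{N}^d$. A run on $w=x_1\cdots x_n$ is $r_1\cdots r_n$ with $r_i=(p_{i-1},x_i,\mathbf{v}_i,p_i)\in\Delta$, $p_0=q_0$ (the empty run on $\varepsilon$ if $n=0$); it is accepting if $p_n\in F$ and $\sum_i\mathbf{v}_i\in C$; $L(\mathcal{A})$ is the set of finite words with an accepting run. The underlying graph has vertex set the states and an edge $(p,q)$ iff some transition goes from $p$ to $q$; a strongly connected component is a maximal set of mutually reachable vertices. *)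

From mathcomp Require Import all_boot.
Set Implicit Arguments. Unset Strict Implicit. Unset Printing Implicit Defensive.

Definition vec (d : nat) := {ffun 'I_d -> nat}.

Definition in_linear (d : nat) (b0 : vec d) (P : seq (vec d)) (v : vec d) : Prop :=
  exists z : seq nat, size z = size P /\
    forall i : 'I_d, v i = b0 i + \sum_(j < size P) (nth b0 P j) i * nth 0 z j.

Definition semilinear (d : nat) (C : vec d -> Prop) : Prop :=
  exists L : seq (vec d * seq (vec d)),
    forall v, C v <-> exists2 bp, bp \in L & in_linear bp.1 bp.2 v.

Record PA (Sigma : finType) (d : nat) := {
  pa_state : finType;
  pa_init : pa_state;
  pa_delta : seq (pa_state * Sigma * vec d * pa_state);
  pa_final : pred pa_state;
  pa_C : vec d -> Prop;
  pa_C_semilinear : semilinear pa_C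
}.

Section PAdefs.
Variables (Sigma : finType) (d : nat) (A : PA Sigma d).

Definition transition := (pa_state A * Sigma * vec d * pa_state A)%type.

Fixpoint is_run (p : pa_state A) (w : seq Sigma) (r : seq transition) : Prop :=
  match w, r with
  | [::], [::] => True
  | x :: w', t :: r' =>
      [/\ t \in pa_delta A, t.1.1.1 = p, t.1.1.2 = x & is_run t.2 w' r']
  | _, _ => False
  end.

Definition run_end (p : pa_state A) (r : seq transition) : pa_state A :=
  last p (map snd r).

Definition run_sum (r : seq transition) : vec d :=
  [ffun i => \sum_(t <- r) t.1.2 i].

Definition in_lang (w : seq Sigma) : Prop :=
  exists r, [/\ is_run (pa_init A) w r,
                @pa_final _ _ A (run_end (pa_init A) r) & pa_C A (run_sum r)].

Definition pa_edge : rel (pa_state A) :=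
  fun p q => has (fun t : transition => (t.1.1.1 == p) && (t.2 == q)) (pa_delta A).

Definition strongly_connected : Prop :=
  forall p q : pa_state A, connect pa_edge p q.

End PAdefs.

(* Add a fresh state [None] that is initial and the only accepting state, and
   let it stand for [q0] as a source.  Every transition [p -> q] of [A] is
   copied, and additionally redirected to [None] when [q] is final.  A new last
   coordinate counts these returns, and the new constraint demands exactly one,
   so an accepting run returns to [None] only at its very end and projects to an
   accepting run of [A].  Strong connectivity comes from transitions between all
   pairs of states that weigh 2 on the new coordinate, which no accepting run
   can afford.  This needs a letter, so the empty alphabet is treated apart. *)

From mathcomp Require Import all_boot.
Set Implicit Arguments. Unset Strict Implicit. Unset Printing Implicit Defensive.

Definition lin_comb (d : nat) (b0 : vec d) (P : seq (vec d)) (z : seq nat) : vec d :=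
  [ffun i => b0 i + \sum_(j < size P) (nth b0 P j) i * nth 0 z j].

Lemma in_linearE d (b0 : vec d) P v :
  in_linear b0 P v <-> exists2 z, size z = size P & v = lin_comb b0 P z.
Proof.
split=> [[z [hz hv]]|[z hz ->]]; exists z => //.
  by apply/ffunP => i; rewrite ffunE hv.
by split=> // i; rewrite ffunE.
Qed.

Section VecRcons.
Variable d : nat.

Definition vec_rcons (v : vec d) (k : nat) : vec d.+1 :=
  [ffun i => if unlift ord_max i is Some j then v j else k].

Definition vec_belast (u : vec d.+1) : vec d := [ffun j => u (lift ord_max j)].

Lemma vec_rcons_max v k : vec_rcons v k ord_max = k.
Proof. by rewrite ffunE unlift_none. Qed.

Lemma vec_rcons_lift v k j : vec_rcons v k (lift ord_max j) = v j.
Proof. by rewrite ffunE liftK. Qed.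

Lemma vec_belast_rcons v k : vec_belast (vec_rcons v k) = v.
Proof. by apply/ffunP => j; rewrite ffunE vec_rcons_lift. Qed.

Lemma vec_rcons_add v v' k k' :
  [ffun i => vec_rcons v k i + vec_rcons v' k' i] =
  vec_rcons [ffun j => v j + v' j] (k + k').
Proof.
apply/ffunP => i; rewrite ffunE.
case: (unliftP ord_max i) => [j ->|->]; last by rewrite !vec_rcons_max.
by rewrite !vec_rcons_lift ffunE.
Qed.

Lemma eq_vec_rcons u v k : u = vec_rcons v k <-> u ord_max = k /\ vec_belast u = v.
Proof.
split=> [->|[hk <-]]; first by rewrite vec_rcons_max vec_belast_rcons.
apply/ffunP => i; case: (unliftP ord_max i) => [j ->|->].
  by rewrite vec_rcons_lift ffunE.
by rewrite vec_rcons_max.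
Qed.

Lemma lin_comb_rcons b0 k P z :
  lin_comb (vec_rcons b0 k) (map (vec_rcons^~ 0) P) z = vec_rcons (lin_comb b0 P z) k.
Proof.
apply/ffunP => i; rewrite ffunE size_map.
case: (unliftP ord_max i) => [j ->|->].
  rewrite !vec_rcons_lift ffunE; congr (_ + _); apply: eq_bigr => l _.
  by rewrite (nth_map b0) ?vec_rcons_lift.
rewrite !vec_rcons_max big1 ?addn0 // => l _.
by rewrite (nth_map b0) ?vec_rcons_max.
Qed.

Lemma in_linear_rcons b0 k P u :
  in_linear (vec_rcons b0 k) (map (vec_rcons^~ 0) P) u <->
  u ord_max = k /\ in_linear b0 P (vec_belast u).
Proof.
split=> [/in_linearE [z hz]|[hk /in_linearE [z hz hv]]].
  rewrite lin_comb_rcons => /eq_vec_rcons [hk hv]; split=> //.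
  by apply/in_linearE; exists z; rewrite // -(size_map (vec_rcons^~ 0)).
apply/in_linearE; exists z; rewrite ?size_map // lin_comb_rcons.
exact/eq_vec_rcons.
Qed.

Lemma semilinear_rcons (C : vec d -> Prop) k :
  semilinear C -> semilinear (fun u => u ord_max = k /\ C (vec_belast u)).
Proof.
case=> L HL; exists [seq (vec_rcons bp.1 k, map (vec_rcons^~ 0) bp.2) | bp <- L] => u.
split=> [[hk /HL [[b0 P] hbp hlin]]|[_ /mapP [[b0 P] hbp ->] /in_linear_rcons [hk hlin]]].
  exists (vec_rcons b0 k, map (vec_rcons^~ 0) P); last exact/in_linear_rcons.
  by apply/mapP; exists (b0, P).
by split=> //; apply/HL; exists (b0, P).
Qed.

End VecRcons.

Section Runs.
Variables (Sigma : finType) (d : nat) (A : PA Sigma d).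

Lemma run_end_cons p (t : transition A) r : run_end p (t :: r) = run_end t.2 r.
Proof. by []. Qed.

Lemma run_sum_cons (t : transition A) r :
  run_sum (t :: r) = [ffun i => t.1.2 i + run_sum r i].
Proof. by apply/ffunP => i; rewrite !ffunE big_cons. Qed.

Lemma run_sum1 (t : transition A) : run_sum [:: t] = t.1.2.
Proof. by apply/ffunP => i; rewrite ffunE big_seq1. Qed.

Lemma is_run_size p w r : is_run (A := A) p w r -> size r = size w.
Proof. by elim: w p r => [|x w IH] p [|t r] //= [_ _ _ /IH ->]. Qed.

End Runs.

Section IOConstruction.
Variables (Sigma : finType) (d : nat) (A : PA Sigma d) (a : Sigma).
Local Notation Q := (pa_state A).
Local Notation q0 := (pa_init A).
Local Notation final := (@pa_final _ _ A).

Definition io_transition := (option Q * Sigma * vec d.+1 * option Q)%type.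

Definition io_copies (s : option Q) (t : transition A) : seq io_transition :=
  (s, t.1.1.2, vec_rcons t.1.2 0, Some t.2) ::
  (if final t.2 then [:: (s, t.1.1.2, vec_rcons t.1.2 1, None)] else [::]).

Definition io_delta : seq io_transition :=
  flatten [seq io_copies s t | s <- enum {: option Q},
                               t <- [seq t <- pa_delta A | odflt q0 s == t.1.1.1]] ++
  [seq (s, a, vec_rcons [ffun => 0] 2, s') | s <- enum {: option Q},
                                              s' <- enum {: option Q}].

Variant io_delta_spec : io_transition -> Prop :=
  | IOCopy s (t : transition A) of t \in pa_delta A & odflt q0 s = t.1.1.1 :
      io_delta_spec (s, t.1.1.2, vec_rcons t.1.2 0, Some t.2)
  | IOReturn s (t : transition A) of t \in pa_delta A & final t.2 & odflt q0 s = t.1.1.1 :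
      io_delta_spec (s, t.1.1.2, vec_rcons t.1.2 1, None)
  | IOJunk s s' : io_delta_spec (s, a, vec_rcons [ffun => 0] 2, s').

Lemma io_deltaP u : u \in io_delta -> io_delta_spec u.
Proof.
rewrite mem_cat => /orP [/flattenP [_ /allpairsPdep [s [t [_ ht ->]]]]|].
  move: ht; rewrite mem_filter => /andP [/eqP hs ht].
  rewrite /io_copies inE; case: ifP => hf; rewrite ?inE ?orbF.
    by case/orP => /eqP ->; constructor.
  by move=> /eqP ->; constructor.
by case/allpairsP => [[s s'] [_ _ ->]]; constructor.
Qed.

Lemma io_copy_in s (t : transition A) : t \in pa_delta A -> odflt q0 s = t.1.1.1 ->
  (s, t.1.1.2, vec_rcons t.1.2 0, Some t.2) \in io_delta.
Proof.
move=> ht hs; rewrite mem_cat; apply/orP; left; apply/flattenP.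
exists (io_copies s t); last exact: mem_head.
by apply/allpairsPdep; exists s, t; rewrite mem_enum mem_filter hs eqxx.
Qed.

Lemma io_return_in s (t : transition A) : t \in pa_delta A -> final t.2 ->
  odflt q0 s = t.1.1.1 -> (s, t.1.1.2, vec_rcons t.1.2 1, None) \in io_delta.
Proof.
move=> ht hf hs; rewrite mem_cat; apply/orP; left; apply/flattenP.
exists (io_copies s t); last by rewrite /io_copies hf !inE eqxx orbT.
by apply/allpairsPdep; exists s, t; rewrite mem_enum mem_filter hs eqxx.
Qed.

Definition pa_IO : PA Sigma d.+1 := {|
  pa_state := option Q;
  pa_init := None;
  pa_delta := io_delta;
  pa_final := fun q => q == None;
  pa_C := fun u => u ord_max = 1 /\ pa_C A (vec_belast u);
  pa_C_semilinear := semilinear_rcons 1 (pa_C_semilinear A) |}.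

Lemma io_run_of_run w s (r : seq (transition A)) :
  is_run (odflt q0 s) w r -> w != [::] -> final (run_end (odflt q0 s) r) ->
  exists rB : seq (transition pa_IO),
    [/\ is_run (A := pa_IO) s w rB, run_end (A := pa_IO) s rB = None
      & run_sum rB = vec_rcons (run_sum r) 1].
Proof.
elim: w s r => [//|x w IH] s [//|t r] /= [ht hts htx hr] _.
rewrite run_end_cons => hf.
case: w IH hr => [|y w] IH hr.
  move/is_run_size/size0nil: hr hf => -> hf.
  exists [:: (s, x, vec_rcons t.1.2 1, None)]; rewrite !run_sum1; split=> //=.
  by split=> //; rewrite -htx; apply: io_return_in.
have [rB [hrB hend hsum]] := IH (Some t.2) r hr isT hf.
exists ((s, x, vec_rcons t.1.2 0, Some t.2) :: rB); split=> //=.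
  by split=> //; rewrite -htx; apply: io_copy_in.
by rewrite !run_sum_cons hsum vec_rcons_add.
Qed.

Lemma io_run_end_None w s (rB : seq (transition pa_IO)) :
  is_run (A := pa_IO) s w rB -> run_sum rB ord_max = 0 ->
  run_end (A := pa_IO) s rB = None -> rB = [::].
Proof.
elim: w s rB => [|x w IH] s [|u rB] //= [/io_deltaP hu _ _ hr].
rewrite run_sum_cons ffunE run_end_cons => /eqP.
rewrite addn_eq0 => /andP [/eqP hu0 /eqP hr0].
case: u / hu hu0 hr => [s' t _ _|s' t|s' s'']; rewrite vec_rcons_max // => _ hr.
move=> hend; have ern := IH _ _ hr hr0 hend.
by move: hend; rewrite ern.
Qed.

Lemma run_of_io_run w s (rB : seq (transition pa_IO)) :
  is_run (A := pa_IO) s w rB -> run_end (A := pa_IO) s rB = None ->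
  run_sum rB ord_max = 1 ->
  exists r : seq (transition A),
    [/\ is_run (odflt q0 s) w r, final (run_end (odflt q0 s) r)
      & run_sum rB = vec_rcons (run_sum r) 1].
Proof.
elim: w s rB => [|x w IH] s [|u rB] //=; first by rewrite ffunE big_nil.
move=> [/io_deltaP hu hus hux hr] hend hsum.
rewrite run_end_cons in hend; rewrite run_sum_cons ffunE in hsum.
case: u / hu hus hux hr hend hsum => [s' t ht hts|s' t ht hf hts|s' s''] /=
  <- <- hr hend; rewrite vec_rcons_max // => hsum.
- have [r [hr' hf hsum']] := IH _ _ hr hend hsum.
  by exists (t :: r); split=> //=; rewrite !run_sum_cons hsum' vec_rcons_add.
- have {}hsum : run_sum rB ord_max = 0 by apply/eqP; rewrite -(eqn_add2l 1) hsum.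
  have ern := io_run_end_None hr hsum hend.
  move: hr; rewrite ern => /is_run_size/esym/size0nil ->.
  by exists [:: t]; rewrite !run_sum1.
Qed.

Lemma in_lang_pa_IO w : w != [::] -> in_lang A w <-> in_lang pa_IO w.
Proof.
move=> hw; split=> [[r [hr hf hC]]|[rB [hrB /= /eqP hend [hsum hC]]]].
- have [rB [hrB hend hsum]] := io_run_of_run (s := None) hr hw hf.
  exists rB; split=> //=; first by rewrite hend.
  by rewrite hsum vec_rcons_max vec_belast_rcons.
- have [r [hr hf hsum']] := run_of_io_run hrB hend hsum.
  by exists r; split=> //; rewrite -(vec_belast_rcons (run_sum r) 1) -hsum'.
Qed.

Lemma pa_IO_strongly_connected : strongly_connected pa_IO.
Proof.
move=> p q; apply: connect1; apply/hasP.
exists (p, a, vec_rcons [ffun => 0] 2, q); last by rewrite !eqxx.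
rewrite mem_cat; apply/orP; right.
by apply/allpairsP; exists (p, q); rewrite !mem_enum.
Qed.

End IOConstruction.

Lemma semilinear_False d : semilinear (fun _ : vec d => False).
Proof. by exists [::] => v; split=> // [[bp]]; rewrite in_nil. Qed.

Definition pa_void (Sigma : finType) (d : nat) : PA Sigma d := {|
  pa_state := unit;
  pa_init := tt;
  pa_delta := [::];
  pa_final := fun q => q == tt;
  pa_C := fun _ => False;
  pa_C_semilinear := semilinear_False d |}.

Theorem lemma9 (Sigma : finType) (d : nat) (A : PA Sigma d) :
  exists B : PA Sigma d.+1,
    [/\ (forall q : pa_state B, @pa_final _ _ B q = (q == pa_init B)),
        (forall w : seq Sigma, w != [::] -> (in_lang A w <-> in_lang B w))
      & strongly_connected B].
Proof.
case: (pickP (fun _ : Sigma => true)) => [a _|no_letter].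
  exists (pa_IO A a); split=> //.
    exact: in_lang_pa_IO.
  exact: pa_IO_strongly_connected.
exists (pa_void Sigma d.+1); split=> //.
  by case=> [|x w] //; have := no_letter x.
by move=> [] []; apply: connect0.
Qed.
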